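(* Let $(f,g),(f',g')\in\Theta$, where the unembedding matrix $L=(g(y_1)\cdots g(y_k))\in\mathbb R^{m\times k}$ has rank $m$, and let $h:\mathcal X\to\Delta^{C-1}$, $C\ge2$, be a concept that is linearly encoded in $f$ with weight matrix $W\in\mathbb R^{m\times C}$ and bias $b\in\mathbb R^C$. Let $A\in\mathbb R^{k\times C}$ be any matrix with $W=LA$. Then $$\inf_{W'\in\mathbb R^{m'\times C},\,b'\in\mathbb R^C}\ \mathbb E_{x\sim p_x}\Big[\mathrm{KL}\big(p_h(\cdot\mid x)\,\big\|\,\mathrm{softmax}(W'^\top f'(x)+b')\big)\Big]\ \le\ \frac12\|A\|_{\mathrm{op}}^2\,d_{\mathrm{logit}}^2(p_{f,g},p_{f',g'}),$$ where $m'$ is the representation dimension of $f'$ and $\|\cdot\|_{\mathrm{op}}$ is the operator norm.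
   Context: Model class $\Theta$: pairs $(f,g)$, $f:\mathcal X\to\mathbb R^m$, $g:\mathcal Y\to\mathbb R^m$, $\mathcal Y=\{y_1,\dots,y_k\}$, $\sum_y g(y)=0$, inducing $p_{f,g}(y\mid x)\propto\exp(f(x)^\top g(y))$; $p_x$ is the data distribution. Logits $u(x)=L^\top f(x)$, $u'(x)=L'^\top f'(x)$; $d_{\mathrm{logit}}^2=\mathbb E_{x\sim p_x}\|u(x)-u'(x)\|_2^2$. A categorical concept is a map $h:\mathcal X\to\Delta^{C-1}$ (simplex over $C$ values) defining $p_h(c\mid x)=h(x)_c$. It is linearly encoded in $f$ if there exist $w_c\in\mathbb R^m$, $b_c\in\mathbb R$ ($c=1,\dots,C$) with $\exp(w_c^\top f(x)+b_c)/\sum_{j=1}^C\exp(w_j^\top f(x)+b_j)=p_h(c\mid x)$ for all $c$ and $x$; $W$ is the matrix with columns $w_c$ and $b=(b_c)_c$. *)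

From HB Require Import structures.
From mathcomp Require Import all_boot all_order all_algebra.
From mathcomp Require Import all_classical all_reals all_analysis.
Set Implicit Arguments. Unset Strict Implicit. Unset Printing Implicit Defensive.
Import Order.TTheory GRing.Theory Num.Theory.
Local Open Scope ring_scope.
Local Open Scope classical_set_scope.

Section Defs.
Variable R : realType.

Definition softmax n (z : 'cV[R]_n) : 'cV[R]_n :=
  \col_i (expR (z i 0) / \sum_j expR (z j 0)).

Definition KL n (p q : 'cV[R]_n) : R :=
  \sum_i (if p i 0 == 0 then 0 else p i 0 * ln (p i 0 / q i 0)).

Definition sqnorm n (v : 'cV[R]_n) : R := \sum_i (v i 0) ^+ 2.

Definition norm2 n (v : 'cV[R]_n) : R := Num.sqrt (sqnorm v).

Definition opnorm p q (A : 'M[R]_(p, q)) : R :=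
  sup [set norm2 (A *m v) | v in [set v : 'cV[R]_q | norm2 v <= 1]].

Definition in_simplex C (v : 'cV[R]_C) : Prop :=
  (forall c, 0 <= v c 0) /\ \sum_c v c 0 = 1.

Definition linearly_encoded (X : Type) m C (f : X -> 'cV[R]_m)
  (h : X -> 'cV[R]_C) (W : 'M[R]_(m, C)) (b : 'cV[R]_C) : Prop :=
  forall x c, h x c 0 = softmax (W^T *m f x + b) c 0.

(* the model class Theta: the unembeddings g(y_1),...,g(y_k) (columns of L) sum to 0 *)
Definition centered_unembedding m k (L : 'M[R]_(m, k)) : Prop :=
  \sum_j col j L = 0.

Definition expected_KL d (X : measurableType d) (P : probability X R) m' C
  (h : X -> 'cV[R]_C) (f' : X -> 'cV[R]_m') (W' : 'M[R]_(m', C)) (b' : 'cV[R]_C)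
  : \bar R :=
  (\int[P]_x (KL (h x) (softmax (W'^T *m f' x + b')))%:E)%E.

Definition dlogit2 d (X : measurableType d) (P : probability X R) m m' k
  (f : X -> 'cV[R]_m) (L : 'M[R]_(m, k)) (f' : X -> 'cV[R]_m') (L' : 'M[R]_(m', k))
  : \bar R :=
  (\int[P]_x (sqnorm (L^T *m f x - L'^T *m f' x))%:E)%E.

Definition best_probe_KL d (X : measurableType d) (P : probability X R) m' C
  (h : X -> 'cV[R]_C) (f' : X -> 'cV[R]_m') : \bar R :=
  ereal_inf (range (fun Wb : 'M[R]_(m', C) * 'cV[R]_C =>
                      expected_KL P h f' Wb.1 Wb.2)).
End Defs.

From HB Require Import structures.
From mathcomp Require Import all_boot all_order all_algebra.
From mathcomp Require Import all_classical all_reals all_analysis.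
From mathcomp Require Import ring.
Set Implicit Arguments. Unset Strict Implicit. Unset Printing Implicit Defensive.
Import Order.TTheory GRing.Theory Num.Theory.
Local Open Scope ring_scope.

(* Take the probe [W' = L' A], [b' = b]: its logits differ from those of [h]
   by [A^T (L'^T f' - L^T f)], so it suffices to show pointwise that
   [KL (softmax u) (softmax v) <= |v - u|^2 / 2] and [|A^T w| <= |A| |w|].
   With [p = softmax u] and [d = v - u], the divergence is the centred log
   moment generating function [ln E_p[e^d] - E_p[d]]. Along
   [t |-> ln E_p[e^(t d)]] the second derivative is the variance of [d] under
   the tilted distribution, which is at most [|d|^2]; integrating twice from
   [t = 0] to [t = 1] gives the bound. *)

Section LogMgf.
Variable R : realType.

Lemma ler0_is_derive_le (f df : R -> R) (a b : R) :
  a <= b -> (forall x : R, is_derive x (1 : R) f (df x)) ->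
  (forall x, a <= x <= b -> df x <= 0) -> f b <= f a.
Proof.
move=> ab fdf df_le0.
have [c cab fba] := MVT_segment ab (fun x _ => fdf x)
  (derivable_within_continuous (fun x _ => @ex_derive _ _ _ _ _ _ _ (fdf x))).
by rewrite -subr_le0 fba mulr_le0_ge0 ?subr_ge0 // df_le0.
Qed.

Lemma is_derive_sum_expR n (a e : 'I_n -> R) (x : R) :
  is_derive x 1 (fun t => \sum_i a i * expR (e i * t))
    (\sum_i a i * e i * expR (e i * x)).
Proof.
have term i : is_derive x 1 (fun t => a i * expR (e i * t)) (a i * e i * expR (e i * x)).
  have lin : is_derive x 1 (e i \*: @id R) (e i *: (1 : R)).
    by apply: is_deriveZ; exact: is_derive_id.
  have -> : (fun t => a i * expR (e i * t)) = a i \*: (expR \o (e i \*: @id R)).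
    by apply: funext => t.
  apply: is_derive_eq; rewrite /= scaler1.
  by change (a i * (expR (e i * x) * e i) = a i * e i * expR (e i * x)); ring.
by have := is_derive_sum term; rewrite fct_sumE.
Qed.

Section LogMgfBound.
Variables (n : nat) (p d : 'I_n -> R).
Hypotheses (p_ge0 : forall i, 0 <= p i) (p_sum1 : \sum_i p i = 1).

Let Z t := \sum_i p i * expR (d i * t).
Let N t := \sum_i p i * d i * expR (d i * t).
Let Q t := \sum_i p i * d i * d i * expR (d i * t).
Let K := \sum_i d i ^+ 2.

Let Z_gt0 t : 0 < Z t.
Proof.
have [i0 /andP[_ pi0]] : exists i, true && (0 < p i).
  by apply: (psumr_neq0P (fun i _ => p_ge0 i)); rewrite p_sum1; exact/eqP/oner_neq0.
rewrite /Z (bigD1 i0) //= ltr_pwDl ?mulr_gt0 ?expR_gt0 //.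
by apply: sumr_ge0 => i _; rewrite mulr_ge0 ?expR_ge0.
Qed.

Let Z0 : Z 0 = 1.
Proof. by rewrite /Z -p_sum1; apply: eq_bigr => i _; rewrite mulr0 expR0 mulr1. Qed.

Let Q_le t : Q t <= K * Z t.
Proof.
rewrite /Q /Z mulr_sumr; apply: ler_sum => i _.
have -> : p i * d i * d i * expR (d i * t) = d i ^+ 2 * (p i * expR (d i * t)).
  by ring.
apply: ler_wpM2r; first by rewrite mulr_ge0 ?expR_ge0.
rewrite /K (bigD1 i) //= lerDl.
by apply: sumr_ge0 => j _; exact: sqr_ge0.
Qed.

(* The tilted mean [N / Z] has derivative the tilted variance, which is at most [K]. *)
Let tilted_mean_le t : 0 <= t -> N t / Z t <= N 0 + K * t.
Proof.
move=> t_ge0.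
have N0 : N 0 = N 0 / Z 0 - K * 0 by rewrite Z0 divr1 mulr0 subr0.
rewrite -lerBlDr N0.
apply: (@ler0_is_derive_le (fun s => N s / Z s - K * s)
                           (fun s => Q s / Z s - (N s / Z s) ^+ 2 - K)) => //.
  move=> s; have Zs := lt0r_neq0 (Z_gt0 s).
  have dZ := is_derive_sum_expR p d s.
  have dN := is_derive_sum_expR (fun i => p i * d i) d s.
  have := is_deriveB (is_deriveM dN (is_deriveV Zs dZ))
                     (is_deriveZ K (is_derive_id s 1)).
  have -> : (N * (fun y => (Z y)^-1)) - K \*: @id R = fun s => N s / Z s - K * s.
    by apply: funext.
  move/is_derive_eq; apply; rewrite scaler1.
  change (N s * (- (Z s) ^- 2 * N s) + (Z s)^-1 * Q s - K
          = Q s / Z s - (N s / Z s) ^+ 2 - K).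
  by field.
move=> s _; rewrite subr_le0 (@le_trans _ _ (Q s / Z s)) //.
  by rewrite lerBlDr lerDl sqr_ge0.
by rewrite ler_pdivrMr // Q_le.
Qed.

Lemma ln_mgf_sub_mean_le :
  ln (\sum_i p i * expR (d i)) - \sum_i p i * d i <= 2^-1 * \sum_i d i ^+ 2.
Proof.
have -> : \sum_i p i * expR (d i) = Z 1.
  by apply: eq_bigr => i _; rewrite mulr1.
have -> : \sum_i p i * d i = N 0.
  by apply: eq_bigr => i _; rewrite mulr0 expR0 mulr1.
pose psi s := ln (Z s) - N 0 * s - 2^-1 * K * s ^+ 2.
have : psi 1 <= psi 0.
  apply: (@ler0_is_derive_le psi (fun s => N s / Z s - N 0 - K * s)) => //.
    move=> s; have dlnZ : is_derive s 1 (@ln R \o Z) ((Z s)^-1 * N s).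
      exact: is_derive1_comp (is_derive1_ln (Z_gt0 s)) (is_derive_sum_expR p d s).
    have := is_deriveB (is_deriveB dlnZ (is_deriveZ (N 0) (is_derive_id s 1)))
      (is_deriveZ (2^-1 * K) (is_deriveX 2 (is_derive_id s 1))).
    have -> : (@ln R \o Z) - N 0 \*: @id R - (2^-1 * K) \*: (@id R) ^+ 2 = psi.
      by apply: funext.
    move/is_derive_eq; apply; rewrite !scaler1.
    change ((Z s)^-1 * N s - N 0 - (2^-1 * K) * (2%:R * s ^+ 1)
            = N s / Z s - N 0 - K * s).
    by field; exact: lt0r_neq0 (Z_gt0 s).
  by move=> s /andP[s_ge0 _]; rewrite subr_le0 lerBlDl tilted_mean_le.
by rewrite /psi /= Z0 ln1 expr1n expr0n /= !mulr0 !mulr1 !subr0 subr_le0.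
Qed.

Lemma mean_le_ln_mgf : \sum_i p i * d i <= ln (\sum_i p i * expR (d i)).
Proof.
set mu := \sum_i p i * d i.
have tangent_sum : \sum_i p i * (1 + (d i - mu)) = 1.
  rewrite (eq_bigr (fun i => p i + p i * d i - mu * p i)) => [|i _]; last by ring.
  by rewrite sumrB big_split /= -mulr_sumr p_sum1 -/mu; ring.
have mu_le : expR mu <= \sum_i p i * expR (d i).
  rewrite -[leLHS]mulr1 -tangent_sum mulr_sumr; apply: ler_sum => i _.
  rewrite mulrCA ler_wpM2l //.
  rewrite -[in leRHS](subrK mu (d i)) expRD mulrC ler_wpM2r ?expR_ge0 //.
  exact: expR_ge1Dx.
by rewrite -ler_expR lnK // posrE (lt_le_trans (expR_gt0 mu)).
Qed.

End LogMgfBound.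
End LogMgf.

Section Norms.
Variable R : realType.

Lemma cauchy_schwarz_sum n (a b : 'I_n -> R) :
  (\sum_i a i * b i) ^+ 2 <= (\sum_i a i ^+ 2) * (\sum_i b i ^+ 2).
Proof.
set Saa := \sum_i a i ^+ 2; set Sab := \sum_i a i * b i; set Sbb := \sum_i b i ^+ 2.
have [Saa0|Saa_neq0] := eqVneq Saa 0.
  have a0 i : a i = 0.
    apply/eqP; rewrite -sqrf_eq0; apply/eqP/(psumr_eq0P _ Saa0) => // j _.
    exact: sqr_ge0.
  by rewrite /Sab big1 ?expr0n ?Saa0 ?mul0r // => i _; rewrite a0 mul0r.
(* evaluate the nonnegative quadratic [t |-> \sum_i (t a_i + b_i)^2] at its minimiser *)
set t := - Sab / Saa.
have quad_ge0 : 0 <= \sum_i (t * a i + b i) ^+ 2.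
  by apply: sumr_ge0 => i _; exact: sqr_ge0.
have quadE : \sum_i (t * a i + b i) ^+ 2 = t ^+ 2 * Saa + 2 * t * Sab + Sbb.
  by rewrite /Saa /Sab /Sbb !mulr_sumr -!big_split /=; apply: eq_bigr => i _; ring.
have Saa_gt0 : 0 < Saa.
  by rewrite lt_def Saa_neq0 sumr_ge0 // => i _; exact: sqr_ge0.
rewrite -subr_ge0 -(pmulr_rge0 _ Saa_gt0).
have -> : Saa * (Saa * Sbb - Sab ^+ 2) = Saa ^+ 2 * (t ^+ 2 * Saa + 2 * t * Sab + Sbb).
  by rewrite /t; field.
by rewrite -quadE mulr_ge0 ?sqr_ge0.
Qed.

Lemma sqnorm_ge0 n (v : 'cV[R]_n) : 0 <= sqnorm v.
Proof. by apply: sumr_ge0 => i _; exact: sqr_ge0. Qed.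

Lemma sqr_norm2 n (v : 'cV[R]_n) : norm2 v ^+ 2 = sqnorm v.
Proof. by rewrite sqr_sqrtr // sqnorm_ge0. Qed.

Lemma sqnormN n (v : 'cV[R]_n) : sqnorm (- v) = sqnorm v.
Proof. by apply: eq_bigr => i _; rewrite mxE sqrrN. Qed.

Lemma norm2Z n c (v : 'cV[R]_n) : norm2 (c *: v) = `|c| * norm2 v.
Proof.
rewrite /norm2 (_ : sqnorm _ = c ^+ 2 * sqnorm v).
  by rewrite sqrtrM ?sqr_ge0 // sqrtr_sqr.
by rewrite /sqnorm mulr_sumr; apply: eq_bigr => i _; rewrite mxE exprMn.
Qed.

Lemma norm2_eq0 n (v : 'cV[R]_n) : norm2 v = 0 -> v = 0.
Proof.
move/eqP; rewrite sqrtr_eq0 le_eqVlt ltNge sqnorm_ge0 orbF => /eqP v0.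
apply/matrixP => i j; rewrite ord1 mxE; apply/eqP; rewrite -sqrf_eq0; apply/eqP.
by apply: (psumr_eq0P _ v0) => // k _; exact: sqr_ge0.
Qed.

Lemma sqnorm_mulmx_le p q (A : 'M[R]_(p, q)) v :
  sqnorm (A *m v) <= (\sum_i \sum_j A i j ^+ 2) * sqnorm v.
Proof.
rewrite /sqnorm mulr_suml; apply: ler_sum => i _.
by rewrite mxE; exact: (cauchy_schwarz_sum (fun j => A i j) (fun j => v j 0)).
Qed.

Lemma norm2_mulmx_le p q (A : 'M[R]_(p, q)) v : norm2 (A *m v) <= opnorm A * norm2 v.
Proof.
set S := [set norm2 (A *m v) | v in [set v : 'cV[R]_q | norm2 v <= 1]]%classic.
have S_ub : has_ubound S.
  exists (Num.sqrt (\sum_i \sum_j A i j ^+ 2)) => _ [w /= w_le1 <-].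
  rewrite ler_sqrt; last by do 2![apply: sumr_ge0 => ? _]; exact: sqr_ge0.
  apply: le_trans (sqnorm_mulmx_le A w) _; rewrite ler_piMr //.
    by do 2![apply: sumr_ge0 => ? _]; exact: sqr_ge0.
  by rewrite -sqr_norm2 exprn_ile1 ?sqrtr_ge0.
have [v0|v_neq0] := eqVneq (norm2 v) 0.
  rewrite v0 mulr0 (norm2_eq0 v0) mulmx0 /norm2 /sqnorm big1 ?sqrtr0 // => i _.
  by rewrite mxE expr0n.
have v_gt0 : 0 < norm2 v by rewrite lt_def v_neq0 sqrtr_ge0.
have Sv : S (norm2 (A *m ((norm2 v)^-1 *: v))).
  by exists ((norm2 v)^-1 *: v) => //=; rewrite norm2Z gtr0_norm ?invr_gt0 // mulVf.
have := ub_le_sup S_ub Sv.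
by rewrite -scalemxAr norm2Z gtr0_norm ?invr_gt0 // mulrC ler_pdivrMr.
Qed.

Lemma dot_le_norm2 n (u v : 'cV[R]_n) : \sum_i u i 0 * v i 0 <= norm2 u * norm2 v.
Proof.
have [s_le0|s_gt0] := lerP (\sum_i u i 0 * v i 0) 0.
  by rewrite (le_trans s_le0) ?mulr_ge0 ?sqrtr_ge0.
have uv_ge0 : 0 <= norm2 u * norm2 v by rewrite mulr_ge0 ?sqrtr_ge0.
rewrite -ler_sqr ?nnegrE ?(ltW s_gt0) // exprMn !sqr_norm2.
exact: cauchy_schwarz_sum.
Qed.

(* [|A^T w|^2 = <w, A A^T w> <= |w| |A| |A^T w|] *)
Lemma sqnorm_trmx_mulmx_le p q (A : 'M[R]_(p, q)) w :
  sqnorm (A^T *m w) <= opnorm A ^+ 2 * sqnorm w.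
Proof.
set y := A^T *m w.
have sqnorm_yE : sqnorm y = \sum_i w i 0 * (A *m y) i 0.
  under [RHS]eq_bigr do rewrite mxE mulr_sumr.
  rewrite exchange_big /=; apply: eq_bigr => j _.
  rewrite expr2 {1}/y mxE mulr_suml; apply: eq_bigr => i _.
  by rewrite mxE; ring.
have y_sq_le : norm2 y ^+ 2 <= norm2 w * opnorm A * norm2 y.
  rewrite sqr_norm2 sqnorm_yE -mulrA; apply: le_trans (dot_le_norm2 w (A *m y)) _.
  by rewrite ler_wpM2l ?sqrtr_ge0 ?norm2_mulmx_le.
have [y0|y_neq0] := eqVneq (norm2 y) 0.
  by rewrite -sqr_norm2 y0 expr0n mulr_ge0 ?sqr_ge0 ?sqnorm_ge0.
have y_gt0 : 0 < norm2 y by rewrite lt_def y_neq0 sqrtr_ge0.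
have y_le : norm2 y <= norm2 w * opnorm A by rewrite -(ler_pM2r y_gt0) -expr2.
rewrite -!sqr_norm2 -exprMn mulrC ler_pXn2r // nnegrE ?sqrtr_ge0 //.
exact: le_trans (ltW y_gt0) y_le.
Qed.
End Norms.

Section Softmax.
Variables (R : realType) (n : nat).
Hypothesis n_gt0 : (0 < n)%N.

Lemma sum_expR_gt0 (z : 'cV[R]_n) : 0 < \sum_j expR (z j 0).
Proof.
rewrite (bigD1 (Ordinal n_gt0)) //= ltr_pwDl ?expR_gt0 //.
by apply: sumr_ge0 => j _; exact: expR_ge0.
Qed.

Lemma softmax_gt0 (z : 'cV[R]_n) i : 0 < softmax z i 0.
Proof. by rewrite mxE divr_gt0 ?expR_gt0 ?sum_expR_gt0. Qed.

Lemma softmax_sum1 (z : 'cV[R]_n) : \sum_i softmax z i 0 = 1.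
Proof.
under eq_bigr do rewrite mxE.
by rewrite -mulr_suml divff // lt0r_neq0 // sum_expR_gt0.
Qed.

(* With [p = softmax u] and [d = v - u]: [softmax v = p e^d / E_p[e^d]]. *)
Lemma KL_softmaxE (u v : 'cV[R]_n) :
  KL (softmax u) (softmax v) =
  ln (\sum_i softmax u i 0 * expR ((v - u) i 0))
    - \sum_i softmax u i 0 * (v - u) i 0.
Proof.
set Zu := \sum_j expR (u j 0); set Zv := \sum_j expR (v j 0).
have [Zu_gt0 Zv_gt0] := (sum_expR_gt0 u, sum_expR_gt0 v).
have mgfE : \sum_i softmax u i 0 * expR ((v - u) i 0) = Zv / Zu.
  rewrite /Zv mulr_suml; apply: eq_bigr => i _.
  rewrite !mxE expRD expRN -/Zu.
  by field; rewrite !lt0r_neq0 ?expR_gt0.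
rewrite mgfE /KL -[ln _]mul1r -(softmax_sum1 u) mulr_suml -sumrB.
apply: eq_bigr => i _; rewrite (gt_eqF (softmax_gt0 _ _)).
have -> : softmax u i 0 / softmax v i 0 = Zv / Zu * expR (- (v - u) i 0).
  rewrite !mxE opprB expRD expRN -/Zu -/Zv.
  by field; rewrite !lt0r_neq0 ?expR_gt0.
by rewrite lnM ?posrE ?divr_gt0 ?expR_gt0 // expRK mulrDr mulrN.
Qed.

Lemma KL_softmax_ge0 (u v : 'cV[R]_n) : 0 <= KL (softmax u) (softmax v).
Proof.
rewrite KL_softmaxE subr_ge0; apply: mean_le_ln_mgf => [i|].
  exact/ltW/softmax_gt0.
exact: softmax_sum1.
Qed.

Lemma KL_softmax_le (u v : 'cV[R]_n) :
  KL (softmax u) (softmax v) <= 2^-1 * sqnorm (v - u).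
Proof.
rewrite KL_softmaxE; apply: ln_mgf_sub_mean_le => [i|].
  exact/ltW/softmax_gt0.
exact: softmax_sum1.
Qed.
End Softmax.

Section Integrals.
Context (R : realType) (d : measure_display) (T : measurableType d).

(* Unlike [ge0_le_integral], the smaller integrand need not be measurable. *)
Lemma ge0_le_integralT (mu : {measure set T -> \bar R}) (f g : T -> \bar R) :
  (forall x, (0 <= f x)%E) -> (forall x, (f x <= g x)%E) ->
  (\int[mu]_x f x <= \int[mu]_x g x)%E.
Proof.
move=> f_ge0 fg; rewrite !ge0_integralTE // => [|x]; last exact: le_trans (fg x).
apply: le_ereal_sup => _ [s s_le <-]; exists s => //= x.
exact: le_trans (s_le x) (fg x).
Qed.

Lemma measurable_mulmx_entry p q (M : 'M[R]_(p, q)) (u : T -> 'cV[R]_q) :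
  (forall j, measurable_fun setT (fun x => u x j 0)) ->
  forall i, measurable_fun setT (fun x => (M *m u x) i 0).
Proof.
move=> mu i; under eq_fun do rewrite mxE.
apply: measurable_sum => j.
by apply: measurable_realfun.measurable_funM => //; exact: measurable_cst.
Qed.

Lemma measurable_sqnorm n (u : T -> 'cV[R]_n) :
  (forall i, measurable_fun setT (fun x => u x i 0)) ->
  measurable_fun setT (fun x => sqnorm (u x)).
Proof.
by move=> mu; apply: measurable_sum => i; exact: measurable_realfun.measurable_funX.
Qed.
End Integrals.

Theorem mainTheorem9 (R : realType) (d : measure_display) (X : measurableType d)
  (P : probability X R) (m m' k C : nat)
  (f : X -> 'cV[R]_m) (L : 'M[R]_(m, k))
  (f' : X -> 'cV[R]_m') (L' : 'M[R]_(m', k))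
  (h : X -> 'cV[R]_C) (W : 'M[R]_(m, C)) (b : 'cV[R]_C) (A : 'M[R]_(k, C)) :
  centered_unembedding L -> centered_unembedding L' ->
  (forall i, measurable_fun setT (fun x => f x i 0)) ->
  (forall i, measurable_fun setT (fun x => f' x i 0)) ->
  (forall c, measurable_fun setT (fun x => h x c 0)) ->
  \rank L = m ->
  (2 <= C)%N ->
  (forall x, in_simplex (h x)) ->
  linearly_encoded f h W b ->
  W = L *m A ->
  (best_probe_KL P h f' <=
     ((2^-1 * opnorm A ^+ 2)%:E * dlogit2 P f L f' L')%E)%E.
Proof.
move=> _ _ mf mf' _ _ C_ge2 _ enc WE.
have C_gt0 : (0 < C)%N by apply: leq_trans C_ge2.
set r := fun x => L^T *m f x - L'^T *m f' x.
have hE x : h x = softmax (W^T *m f x + b).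
  by apply/matrixP => i j; rewrite ord1 enc.
have logit_gap x : (L' *m A)^T *m f' x + b - (W^T *m f x + b) = A^T *m - r x.
  by rewrite WE !trmx_mul -!mulmxA mulmxN mulmxBr opprB opprD addrACA subrr addr0.
have KL_le x : KL (h x) (softmax ((L' *m A)^T *m f' x + b))
               <= 2^-1 * opnorm A ^+ 2 * sqnorm (r x).
  rewrite hE -mulrA; apply: le_trans (KL_softmax_le C_gt0 _ _) _.
  rewrite logit_gap ler_wpM2l ?invr_ge0 ?ler0n //.
  by rewrite -(sqnormN (r x)) sqnorm_trmx_mulmx_le.
have c_ge0 : 0 <= 2^-1 * opnorm A ^+ 2 by rewrite mulr_ge0 ?invr_ge0 ?sqr_ge0.
apply: (@le_trans _ _ (expected_KL P h f' (L' *m A) b)).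
  by apply: ereal_inf_lbound; exists (L' *m A, b).
rewrite /expected_KL /dlogit2 -ge0_integralZl_EFin //.
- apply: ge0_le_integralT => x.
    by rewrite lee_fin hE KL_softmax_ge0.
  by rewrite -EFinM lee_fin KL_le.
- by move=> x _; rewrite lee_fin sqnorm_ge0.
- apply/measurable_realfun.measurable_EFinP; apply: measurable_sqnorm => i.
  under eq_fun do rewrite [_ i 0]mxE [X in _ + X]mxE.
  by apply: measurable_realfun.measurable_funB; exact: measurable_mulmx_entry.
Qed.
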